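(* Let $L_{n,j}$, $D_{n,j}$, $U_{n,j}$ denote the total number of levels, descents, and ascents, respectively, over all members of $I_{n,j}$. Then $$\sum_{n\ge1}\sum_{j=1}^nL_{n,j}y^j\frac{x^n}{n!}=xy+\frac{2(xy-y-1)\ln(1-xy)-2y(x-2)\ln(1-x)-y\left(\ln^2(1-xy)-\ln^2(1-x)\right)}{2(1-y)},$$ $$\sum_{n\ge1}\sum_{j=1}^nD_{n,j}y^j\frac{x^n}{n!}=\frac{xy}{2(1-y)}\left(\frac{3x-2}{1-x}-\frac{xy^2}{1-xy}\right)+\frac{(1-xy)\ln(1-xy)-y(2-x-y)\ln(1-x)}{(1-y)^2}+\frac{y\left(\ln^2(1-xy)-\ln^2(1-x)\right)}{2(1-y)},$$ $$\sum_{n\ge1}\sum_{j=1}^nU_{n,j}y^j\frac{x^n}{n!}=\frac{xy}{2(1-y)}\left(\frac{2-x}{1-x}-\frac{xy^2}{1-xy}\right)+\frac{y(1-xy)}{(1-y)^2}\ln\left(\frac{1-x}{1-xy}\right).$$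
   Context: An inversion sequence of length $n$ is a sequence $\rho=\rho_1\cdots\rho_n$ of integers with $1\le \rho_i\le i$ for all $i$; $I_{n,j}$ is the set of those of length $n$ with last letter $j$. A level, descent, or ascent of $\rho$ is an index $i\in[n-1]$ with $\rho_i=\rho_{i+1}$, $\rho_i>\rho_{i+1}$, or $\rho_i<\rho_{i+1}$, respectively. *)

From Stdlib Require Import Reals.
From mathcomp Require Import all_boot.
Set Implicit Arguments. Unset Strict Implicit. Unset Printing Implicit Defensive.

(* A word of length n with letters in {0,..,n}; position i (0-based) holds rho_(i+1). *)
Definition word (n : nat) := n.-tuple 'I_n.+1.

Definition is_invseq n (r : word n) : bool :=
  [forall i : 'I_n, (0 < tnth r i) && (tnth r i <= i.+1)].

Definition letters n (r : word n) : seq nat := map val (tval r).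

Definition last_letter n (r : word n) : nat := last 0 (letters r).

(* numbers of levels / descents / ascents: indices i in [n-1] (here 0-based
   positions 0..n-2) comparing rho_i and rho_(i+1) *)
Definition count_pos (P : nat -> nat -> bool) (s : seq nat) : nat :=
  count (fun i => P (nth 0 s i) (nth 0 s i.+1)) (iota 0 (size s).-1).
Definition nlevels (s : seq nat) := count_pos (fun a b => a == b) s.
Definition ndescents (s : seq nat) := count_pos (fun a b => b < a) s.
Definition nascents (s : seq nat) := count_pos (fun a b => a < b) s.

Definition total (stat : seq nat -> nat) (n j : nat) : nat :=
  \sum_(r : word n | is_invseq r && (last_letter r == j)) stat (letters r).

Definition Ltot := total nlevels.
Definition Dtot := total ndescents.
Definition Utot := total nascents.

Local Open Scope R_scope.

Definition egf_term (T : nat -> nat -> nat) (x y : R) (n : nat) : R :=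
  match n with
  | O => 0
  | S m => sum_f_R0 (fun k => INR (T n (S k)) * y ^ (S k)) m * x ^ n / INR (n`!)
  end.

(* Every inversion sequence of length n+1 arises exactly once by appending a
   letter v in [1, n+1] to one of length n, and the new adjacent pair (u, v),
   u the old last letter, is a level, descent or ascent according to how u
   compares with v.  Hence the total T_(m+2,j) of a statistic over I_(m+2,j) is
   its grand total over I_(m+1) plus m! times the number of letters u in
   [1, m+1] in the right relation to j.  The grand totals obey a first-order
   recurrence, solved by (m+1)! (H_(m+1) - 1), (m+1)! ((m+2)/2 - H_(m+1)) and
   (m+1)! m/2 for levels, descents and ascents.  After summing against
   y^j x^(m+2)/(m+2)!, every coefficient is a combination of those of
   ln(1-w)^2/2 = sum H_n w^(n+1)/(n+1) (a Cauchy product), -ln(1-w) - w,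
   -w ln(1-w) and w^2/(1-w), taken at w = x and at w = xy. *)

From Stdlib Require Import Reals Lra Lia.
From Coquelicot Require Import Coquelicot.
From mathcomp Require Import all_boot zify.
Set Implicit Arguments. Unset Strict Implicit. Unset Printing Implicit Defensive.
Local Open Scope nat_scope.

Fixpoint invseqs (n : nat) : seq (seq nat) :=
  if n is n'.+1 then [seq rcons s v | s <- invseqs n', v <- iota 1 n] else [:: [::]].

Lemma invseqsS n : invseqs n.+1 = [seq rcons s v | s <- invseqs n, v <- iota 1 n.+1].
Proof. by []. Qed.

Definition is_invseq_seq n (s : seq nat) : bool :=
  (size s == n) && all (fun i => 0 < nth 0 s i <= i.+1) (iota 0 n).

Lemma is_invseq_seq_rcons n s v :
  is_invseq_seq n.+1 (rcons s v) = [&& is_invseq_seq n s, 0 < v & v <= n.+1].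
Proof.
rewrite /is_invseq_seq size_rcons eqSS; case: eqP => // size_s.
rewrite -[n.+1]addn1 iotaD all_cat /= !nth_rcons size_s ltnn eqxx andbT addn1.
congr (_ && _); apply: eq_in_all => i; rewrite mem_iota => /andP [_ lt_in].
by rewrite nth_rcons size_s lt_in.
Qed.

Lemma mem_invseqs n s : (s \in invseqs n) = is_invseq_seq n s.
Proof.
elim: n s => [|n IHn] s; first by rewrite inE /is_invseq_seq /= andbT size_eq0.
case/lastP: s => [|s v].
  apply/allpairsP => -[[s' v'] [_ _ /(congr1 size)]].
  by rewrite size_rcons.
rewrite is_invseq_seq_rcons -IHn; apply/allpairsP/idP.
  case=> -[s' v'] [s'_in v'_in /rcons_inj [-> ->]].
  by rewrite s'_in -(ltnS v') -mem_iota.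
case/and3P => s_in v_gt0 v_le; exists (s, v); split=> //.
by rewrite mem_iota add1n ltnS v_gt0.
Qed.

Lemma uniq_invseqs n : uniq (invseqs n).
Proof.
elim: n => [|n IHn] //; rewrite invseqsS allpairs_uniq ?iota_uniq //.
by move=> [s1 v1] [s2 v2] _ _ /= /rcons_inj [-> ->].
Qed.

Lemma size_invseqs n : size (invseqs n) = n`!.
Proof. by elim: n => [|n IHn] //; rewrite invseqsS size_allpairs IHn size_iota factS mulnC. Qed.

Lemma letters_inj n : injective (@letters n).
Proof. by move=> r1 r2 /(inj_map val_inj) /val_inj. Qed.

Lemma letters_invseq n s :
  (s \in [seq letters r | r <- index_enum (word n) & is_invseq r]) = is_invseq_seq n s.
Proof.
apply/mapP/idP => [[r] | /andP [/eqP size_s /allP s_bounded]].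
  rewrite mem_filter => /andP [/forallP r_bounded _] ->.
  rewrite /is_invseq_seq /letters size_map size_tuple eqxx /=.
  apply/allP => i; rewrite mem_iota => /andP [_ lt_in].
  by rewrite (nth_map ord0) ?size_tuple // -(tnth_nth _ _ (Ordinal lt_in)).
have bounded i : i < n -> 0 < nth 0 s i <= i.+1.
  by move=> lt_in; apply: s_bounded; rewrite mem_iota.
have letter_lt i : i < n -> nth 0 s i < n.+1.
  by move=> lt_in; case/andP: (bounded i lt_in) => _ /leq_ltn_trans; apply.
exists [tuple (inord (nth 0 s i) : 'I_n.+1) | i < n].
  rewrite mem_filter mem_index_enum andbT; apply/forallP => i.
  by rewrite tnth_mktuple inordK ?bounded ?letter_lt.
apply: (@eq_from_nth _ 0); first by rewrite /letters size_map size_tuple.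
move=> i; rewrite size_s => lt_in.
rewrite /letters (nth_map ord0) ?size_tuple // -[i]/(nat_of_ord (Ordinal lt_in)).
by rewrite -tnth_nth tnth_mktuple /= inordK ?letter_lt.
Qed.

Lemma total_invseqs stat n j :
  total stat n j = \sum_(s <- invseqs n | last 0 s == j) stat s.
Proof.
rewrite /total /last_letter -big_filter_cond -(big_map (@letters n) (fun s => last 0 s == j)).
apply: perm_big; apply: uniq_perm.
- by rewrite map_inj_uniq ?filter_uniq ?index_enum_uniq //; apply: letters_inj.
- exact: uniq_invseqs.
- by move=> s; rewrite letters_invseq mem_invseqs.
Qed.

Lemma count_pos_rcons P s v : s != [::] ->
  count_pos P (rcons s v) = count_pos P s + P (last 0 s) v.
Proof.
move=> s_nil; rewrite /count_pos size_rcons /=.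
have size_s : size s = (size s).-1.+1 by rewrite prednK // lt0n size_eq0.
rewrite {1}size_s -addn1 iotaD count_cat /= addn0; congr (_ + _).
  apply: eq_in_count => i; rewrite mem_iota => /andP [_ lt_i].
  by rewrite !nth_rcons size_s ltnS (ltnW lt_i) ltnS lt_i.
by rewrite !nth_rcons size_s ltnSn ltnn eqxx -nth_last size_s.
Qed.

Lemma nonempty_invseqs n s : s \in invseqs n.+1 -> s != [::].
Proof. by rewrite mem_invseqs -size_eq0 => /andP [/eqP ->]. Qed.

Section Recurrences.

Variable P : nat -> nat -> bool.

Definition grand_total n := \sum_(s <- invseqs n) count_pos P s.

Definition prev_count k j := count (P^~ j) (iota 1 k).

Lemma prev_countE k j : prev_count k j = \sum_(u <- iota 1 k) P u j.
Proof. by rewrite /prev_count -sum1_count big_mkcond. Qed.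

Lemma sum_last_letter m j :
  \sum_(s <- invseqs m.+1) P (last 0 s) j = m`! * prev_count m.+1 j.
Proof.
rewrite invseqsS big_allpairs_dep /=.
under eq_bigr do under eq_bigr do rewrite last_rcons.
by rewrite big_const_seq count_predT size_invseqs iter_addn_0 prev_countE mulnC.
Qed.

Lemma total_SS m j : 0 < j <= m.+2 ->
  total (count_pos P) m.+2 j = grand_total m.+1 + m`! * prev_count m.+1 j.
Proof.
move=> j_range; rewrite total_invseqs big_mkcond invseqsS big_allpairs_dep.
rewrite (eq_big_seq (fun s => count_pos P s + P (last 0 s) j)).
  by rewrite big_split /= sum_last_letter.
move=> s s_in; rewrite -big_mkcond.
under eq_bigl do rewrite last_rcons.
rewrite -big_filter (@filter_pred1_uniq _ _ j) ?iota_uniq ?mem_iota ?add1n ?ltnS //.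
by rewrite big_seq1 count_pos_rcons ?(nonempty_invseqs s_in).
Qed.

Lemma grand_total_SS m :
  grand_total m.+2 = m.+2 * grand_total m.+1 + m`! * \sum_(v <- iota 1 m.+2) prev_count m.+1 v.
Proof.
rewrite /grand_total invseqsS big_allpairs_dep.
rewrite (eq_big_seq (fun s => \sum_(v <- iota 1 m.+2) (count_pos P s + P (last 0 s) v))).
  under eq_bigr do rewrite big_split.
  rewrite big_split; congr addn.
    rewrite big_distrr; apply: eq_bigr => s _.
    by rewrite big_const_seq count_predT size_iota iter_addn_0 mulnC.
  by rewrite exchange_big big_distrr; apply: eq_bigr => v _; apply: sum_last_letter.
move=> s s_in; apply: eq_bigr => v _.
by rewrite count_pos_rcons ?(nonempty_invseqs s_in).
Qed.

Lemma grand_total1 : grand_total 1 = 0.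
Proof. by rewrite /grand_total big_seq1. Qed.

Lemma total1 j : total (count_pos P) 1 j = 0.
Proof. by rewrite total_invseqs big_mkcond big_seq1; case: ifP. Qed.

End Recurrences.

Lemma prev_countS P k j : prev_count P k.+1 j = prev_count P k j + P k.+1 j.
Proof. by rewrite /prev_count -[k.+1]addn1 iotaD count_cat /= add1n addn0 addn1. Qed.

Lemma prev_count_level k j : 0 < j -> prev_count (fun a b => a == b) k j = (j <= k).
Proof.
move=> j_gt0; elim: k => [|k IHk]; first by rewrite leqNgt j_gt0.
by rewrite prev_countS IHk /=; lia.
Qed.

Lemma prev_count_descent k j : prev_count (fun a b => b < a) k j = k - j.
Proof. by elim: k => [|k IHk] //; rewrite prev_countS IHk /=; lia. Qed.

Lemma prev_count_ascent k j : 0 < j -> prev_count (fun a b => a < b) k j = minn j.-1 k.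
Proof.
move=> j_gt0; elim: k => [|k IHk]; first by rewrite minn0.
by rewrite prev_countS IHk /=; lia.
Qed.

Local Open Scope R_scope.

Lemma INR_sum_iota1 (f : nat -> nat) k :
  INR (\sum_(v <- iota 1 k.+1) f v)%N = sum_f_R0 (fun i => INR (f i.+1)) k.
Proof.
elim: k => [|k IHk]; first by rewrite big_seq1.
by rewrite -[k.+2]addn1 iotaD big_cat big_seq1 plus_INR IHk tech5 add1n.
Qed.

Lemma sum_f_R0_INR n : sum_f_R0 INR n = INR n * (INR n + 1) / 2.
Proof. by elim: n => [|n IHn]; rewrite ?tech5 ?IHn ?S_INR /=; field. Qed.

Lemma sum_f_R0_rev (f : nat -> R) n : sum_f_R0 (fun k => f (n - k)%N) n = sum_f_R0 f n.
Proof.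
elim: n => [|n IHn] //; rewrite decomp_sum ?tech5 /=; last by lia.
rewrite (PartSum.sum_eq _ (fun i => f (n - i)%N)) // IHn subn0; ring.
Qed.

Lemma fact_INR_neq0 n : INR n`! <> 0.
Proof. by apply: not_0_INR; apply/eqP; rewrite -lt0n fact_gt0. Qed.

Lemma fact_INR_S n : INR n.+1`! = (INR n + 1) * INR n`!.
Proof. by rewrite factS mult_INR S_INR. Qed.

(* [harm m] is the harmonic number H_(m+1), since [sum_f_R0 _ m] has m+1 terms. *)
Definition harm m := sum_f_R0 (fun i => / INR i.+1) m.

Lemma harmS m : harm m.+1 = harm m + / (INR m + 2).
Proof. by rewrite /harm tech5 !S_INR; congr (_ + / _); ring. Qed.

Lemma sum_prev_count_level m :
  INR (\sum_(v <- iota 1 m.+2) prev_count (fun a b => a == b) m.+1 v)%N = INR m + 1.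
Proof.
rewrite (eq_big_seq (fun v => (v <= m.+1)%N : nat)); last first.
  by move=> v; rewrite mem_iota => /andP [v_gt0 _]; rewrite prev_count_level.
rewrite INR_sum_iota1 tech5 ltnn Rplus_0_r (PartSum.sum_eq _ (fun _ => 1)).
  by rewrite sum_cte S_INR; ring.
by move=> i /leP le_im; rewrite ltnS; have -> : (i <= m)%N by lia.
Qed.

Lemma sum_prev_count_descent m :
  INR (\sum_(v <- iota 1 m.+2) prev_count (fun a b => b < a)%N m.+1 v)%N
  = INR m * (INR m + 1) / 2.
Proof.
rewrite (eq_big_seq (fun v => m.+1 - v)%N); last by move=> v _; rewrite prev_count_descent.
rewrite INR_sum_iota1 tech5 subSS subnS subnn Rplus_0_r -sum_f_R0_INR -(sum_f_R0_rev INR).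
by apply: PartSum.sum_eq => i _; rewrite subSS.
Qed.

Lemma sum_prev_count_ascent m :
  INR (\sum_(v <- iota 1 m.+2) prev_count (fun a b => a < b)%N m.+1 v)%N
  = (INR m + 1) * (INR m + 2) / 2.
Proof.
rewrite (eq_big_seq (fun v => minn v.-1 m.+1)); last first.
  by move=> v; rewrite mem_iota => /andP [v_gt0 _]; rewrite prev_count_ascent.
rewrite INR_sum_iota1 (PartSum.sum_eq _ INR); last first.
  by move=> i /leP le_im /=; congr INR; lia.
by rewrite sum_f_R0_INR !S_INR; field.
Qed.

Lemma grand_total_levels m :
  INR (grand_total (fun a b => a == b) m.+1) = INR m.+1`! * (harm m - 1).
Proof.
elim: m => [|m IHm]; first by rewrite grand_total1 /harm /=; field.
rewrite grand_total_SS plus_INR (mult_INR m.+2) (mult_INR m`!) sum_prev_count_level IHm harmS.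
rewrite (fact_INR_S m.+1) (fact_INR_S m) !S_INR; have m_ge0 := pos_INR m; field; lra.
Qed.

Lemma grand_total_descents m :
  INR (grand_total (fun a b => b < a)%N m.+1) = INR m.+1`! * ((INR m + 2) / 2 - harm m).
Proof.
elim: m => [|m IHm]; first by rewrite grand_total1 /harm /=; field.
rewrite grand_total_SS plus_INR (mult_INR m.+2) (mult_INR m`!) sum_prev_count_descent IHm harmS.
rewrite (fact_INR_S m.+1) (fact_INR_S m) !S_INR; have m_ge0 := pos_INR m; field; lra.
Qed.

Lemma grand_total_ascents m :
  INR (grand_total (fun a b => a < b)%N m.+1) = INR m.+1`! * (INR m / 2).
Proof.
elim: m => [|m IHm]; first by rewrite grand_total1 /=; field.
rewrite grand_total_SS plus_INR (mult_INR m.+2) (mult_INR m`!) sum_prev_count_ascent IHm.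
by rewrite (fact_INR_S m.+1) (fact_INR_S m) !S_INR; field.
Qed.

Lemma sum_pow_S y n : y <> 1 -> sum_f_R0 (fun k => y ^ k.+1) n = y * (1 - y ^ n.+1) / (1 - y).
Proof.
move=> y_neq1; have y_neq1' : 1 - y <> 0 by lra.
by elim: n => [|n IHn]; rewrite ?tech5 ?IHn /=; field.
Qed.

Lemma sum_rev_weight_pow_S y m : y <> 1 ->
  sum_f_R0 (fun k => INR (m - k) * y ^ k.+1) m
  = (INR m + 1 - (INR m + 2) * y + y ^ m.+2) / (1 - y) ^ 2 - (INR m + 1).
Proof.
move=> y_neq1; have y_neq1' : 1 - y <> 0 by lra.
elim: m => [|m IHm]; first by rewrite /=; field.
rewrite tech5 subnn (PartSum.sum_eq _ (fun k => INR (m - k) * y ^ k.+1 + y ^ k.+1)).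
  by rewrite plus_sum IHm sum_pow_S // S_INR /=; field.
by move=> k /leP le_km; rewrite subSn // S_INR; ring.
Qed.

Lemma sum_weight_pow_S y n : y <> 1 ->
  sum_f_R0 (fun k => INR k * y ^ k.+1) n
  = y ^ 2 * (1 - (INR n + 1) * y ^ n + INR n * y ^ n.+1) / (1 - y) ^ 2.
Proof.
move=> y_neq1; have y_neq1' : 1 - y <> 0 by lra.
by elim: n => [|n IHn]; rewrite ?tech5 ?IHn ?S_INR /=; field.
Qed.

Lemma egf_term_total_SS P x y m :
  egf_term (total (count_pos P)) x y m.+2
  = x ^ m.+2 / INR m.+2`! *
    (INR (grand_total P m.+1) * sum_f_R0 (fun k => y ^ k.+1) m.+1
     + INR m`! * sum_f_R0 (fun k => INR (prev_count P m.+1 k.+1) * y ^ k.+1) m.+1).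
Proof.
rewrite /egf_term (PartSum.sum_eq _ (fun k =>
  y ^ k.+1 * INR (grand_total P m.+1) + INR (prev_count P m.+1 k.+1) * y ^ k.+1 * INR m`!)).
  by rewrite plus_sum -!scal_sum; field; apply: fact_INR_neq0.
move=> k /leP le_km; rewrite total_SS; last by apply/andP; split; lia.
by rewrite plus_INR mult_INR; ring.
Qed.

Lemma prev_count_level_gf y m :
  sum_f_R0 (fun k => INR (prev_count (fun a b => a == b) m.+1 k.+1) * y ^ k.+1) m.+1
  = sum_f_R0 (fun k => y ^ k.+1) m.
Proof.
rewrite tech5 prev_count_level // ltnn Rmult_0_l Rplus_0_r.
apply: PartSum.sum_eq => k /leP le_km; rewrite prev_count_level // ltnS.
have -> : (k <= m)%N by lia.
by rewrite Rmult_1_l.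
Qed.

Lemma prev_count_descent_gf y m :
  sum_f_R0 (fun k => INR (prev_count (fun a b => b < a)%N m.+1 k.+1) * y ^ k.+1) m.+1
  = sum_f_R0 (fun k => INR (m - k) * y ^ k.+1) m.
Proof.
rewrite tech5 prev_count_descent subSS subnS subnn Rmult_0_l Rplus_0_r.
by apply: PartSum.sum_eq => k _; rewrite prev_count_descent subSS.
Qed.

Lemma prev_count_ascent_gf y m :
  sum_f_R0 (fun k => INR (prev_count (fun a b => a < b)%N m.+1 k.+1) * y ^ k.+1) m.+1
  = sum_f_R0 (fun k => INR k * y ^ k.+1) m.+1.
Proof.
apply: PartSum.sum_eq => k /leP le_km; rewrite prev_count_ascent //=.
by congr (INR _ * _); lia.
Qed.

(* Coquelicot's lemmas restated with the operations of R itself: the generic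
   [plus]/[scal] of normed modules are invisible to [field]. *)
Lemma is_seriesR_ext (a b : nat -> R) l :
  (forall n, a n = b n) -> is_series a l -> is_series b l.
Proof. exact: is_series_ext. Qed.

Lemma is_seriesR_plus (a b : nat -> R) la lb :
  is_series a la -> is_series b lb -> is_series (fun n => a n + b n) (la + lb).
Proof. exact: is_series_plus. Qed.

Lemma is_seriesR_scal c (a : nat -> R) l :
  is_series a l -> is_series (fun n => c * a n) (c * l).
Proof. exact: is_series_scal. Qed.
Arguments is_seriesR_scal c {a l}.

Lemma is_seriesR_shift (a : nat -> R) l :
  is_series a l -> is_series (fun n => a n.+1) (l - a 0%N).
Proof. by move=> a_l; apply: is_series_incr_1; rewrite /plus /= Rplus_comm Rplus_minus. Qed.

(* In Stdlib [/ 0 = 0], so [fun n => / INR n] is exactly the coefficient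
   sequence of -ln(1-w). *)
Lemma CV_radius_inv_INR : Rbar_le 1 (CV_radius (fun n => / INR n)).
Proof.
apply: (proj1 (CV_radius_bounded _)); exists 1 => -[|n].
  by rewrite Rinv_0 Rmult_0_l Rabs_R0; lra.
have n_ge1 : 1 <= INR n.+1 by apply: (le_INR 1); lia.
rewrite pow1 Rmult_1_r Rabs_right; last by apply/Rle_ge/Rlt_le/Rinv_0_lt_compat; lra.
by rewrite -Rinv_1; apply: Rinv_le_contravar; lra.
Qed.

Lemma abs_lt_CV_radius_inv_INR w :
  Rabs w < 1 -> Rbar_lt (Rabs w) (CV_radius (fun n => / INR n)).
Proof. by move=> w_lt1; apply: (Rbar_lt_le_trans _ 1) CV_radius_inv_INR. Qed.

Lemma PSeries_const1 w : Rabs w < 1 -> PSeries (fun _ => 1) w = / (1 - w).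
Proof.
move=> w_lt1; apply: is_series_unique.
by apply: is_seriesR_ext (is_series_geom w w_lt1) => n; rewrite Rmult_1_l.
Qed.

Lemma PSeries_inv_INR w : Rabs w < 1 -> PSeries (fun n => / INR n) w = - ln (1 - w).
Proof.
move=> w_lt1.
have deriv0 c : Rabs (c - 0) <= Rabs w ->
    is_derive (fun t => PSeries (fun n => / INR n) t + ln (1 - t)) c 0.
  rewrite Rminus_0_r => c_le; have c_lt1 : Rabs c < 1 by lra.
  have [c_lt _] := Rabs_def2 _ _ c_lt1.
  have -> : 0 = PSeries (PS_derive (fun n => / INR n)) c + (-1) * / (1 - c).
    rewrite (PSeries_ext _ (fun _ => 1)) ?PSeries_const1 //; first by field; lra.
    by move=> n; rewrite /PS_derive; field; apply: not_0_INR.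
  apply: (is_derive_plus (PSeries _) (fun t => ln (1 - t))).
    exact/is_derive_PSeries/abs_lt_CV_radius_inv_INR.
  by auto_derive; [lra | field; lra].
have [c [eq0 _]] := MVT_cor4 _ _ 0 (Rabs w) deriv0 w (ltac:(rewrite Rminus_0_r; lra)).
by move: eq0; rewrite PSeries_0 Rinv_0 Rminus_0_r ln_1; lra.
Qed.

Definition log_coef w m := w ^ m.+1 / INR m.+1.

Lemma is_series_log w : Rabs w < 1 -> is_series (log_coef w) (- ln (1 - w)).
Proof.
move=> w_lt1; rewrite -PSeries_inv_INR //.
have := PSeries_correct _ _ (CV_radius_inside _ _ (abs_lt_CV_radius_inv_INR w_lt1)).
move/is_pseries_R/is_seriesR_shift.
rewrite Rinv_0 Rmult_0_l Rminus_0_r.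
by apply: is_seriesR_ext => n; rewrite /log_coef Rmult_comm.
Qed.

Lemma is_series_log_shift w : Rabs w < 1 -> is_series (fun m => log_coef w m.+1) (- ln (1 - w) - w).
Proof.
move=> w_lt1; have := is_seriesR_shift (is_series_log w_lt1).
by rewrite /log_coef /= Rmult_1_r Rdiv_1_r.
Qed.

Lemma is_series_geom2 w : Rabs w < 1 -> is_series (fun m => w ^ m.+2) (w ^ 2 / (1 - w)).
Proof.
move=> w_lt1; have := is_seriesR_scal (w ^ 2) (is_series_geom w w_lt1).
by apply: is_seriesR_ext => m; rewrite -pow_add.
Qed.

Lemma sum_inv_mul_inv n :
  sum_f_R0 (fun k => / INR k.+1 * / INR (n - k).+1) n = 2 * harm n / INR n.+2.
Proof.
rewrite (PartSum.sum_eq _ (fun k => (/ INR k.+1 + / INR (n - k).+1) * / INR n.+2)).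
  rewrite -scal_sum plus_sum (sum_f_R0_rev (fun k => / INR k.+1)).
  by rewrite /harm; field; apply: not_0_INR.
move=> k /leP le_kn; have -> : INR n.+2 = INR k.+1 + INR (n - k).+1.
  by rewrite -plus_INR; congr INR; lia.
have [k_pos nk_pos] : 0 < INR k.+1 /\ 0 < INR (n - k).+1 by split; apply: lt_0_INR; lia.
by field; lra.
Qed.

Definition log_sqr_coef w m := harm m * w ^ m.+2 / INR m.+2.

Lemma is_series_log_sqr w : Rabs w < 1 -> is_series (log_sqr_coef w) (ln (1 - w) ^ 2 / 2).
Proof.
move=> w_lt1.
have abs_log : ex_series (fun n => Rabs (log_coef w n)).
  exists (- ln (1 - Rabs w)); apply: is_seriesR_ext (is_series_log _); last by rewrite Rabs_Rabsolu.
  move=> n; rewrite /log_coef Rabs_mult Rabs_inv RPow_abs.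
  by rewrite (Rabs_pos_eq (INR _)) //; apply: pos_INR.
have cauchy := is_series_mult _ _ _ _ (is_series_log w_lt1) (is_series_log w_lt1).
have := is_seriesR_scal (/ 2) (cauchy abs_log abs_log).
have -> : / 2 * (- ln (1 - w) * - ln (1 - w)) = ln (1 - w) ^ 2 / 2 by rewrite /=; field.
apply: is_seriesR_ext => n.
rewrite (PartSum.sum_eq _ (fun k => / INR k.+1 * / INR (n - k).+1 * w ^ n.+2)).
  by rewrite -scal_sum sum_inv_mul_inv /log_sqr_coef; field; apply: not_0_INR.
move=> k /leP le_kn; rewrite /log_coef -/(n - k)%N.
have -> : w ^ n.+2 = w ^ k.+1 * w ^ (n - k).+1 by rewrite -pow_add; congr pow; lia.
by field; split; apply: not_0_INR.
Qed.

Definition lincomb_coef (a b c d w : R) m :=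
  a * log_sqr_coef w m + b * log_coef w m.+1 + c * (w * log_coef w m) + d * w ^ m.+2.

Definition lincomb_sum (a b c d w : R) :=
  a * (ln (1 - w) ^ 2 / 2) + b * (- ln (1 - w) - w) + c * (w * - ln (1 - w))
  + d * (w ^ 2 / (1 - w)).

Lemma is_series_lincomb a b c d w :
  Rabs w < 1 -> is_series (lincomb_coef a b c d w) (lincomb_sum a b c d w).
Proof.
move=> w_lt1; rewrite /lincomb_coef /lincomb_sum.
apply: is_seriesR_plus; first apply: is_seriesR_plus; first apply: is_seriesR_plus.
all: apply: is_seriesR_scal.
- exact: is_series_log_sqr.
- exact: is_series_log_shift.
- exact: is_seriesR_scal (is_series_log w_lt1).
- exact: is_series_geom2.
Qed.

Lemma egf_term_total1 P x y : egf_term (total (count_pos P)) x y 1 = 0.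
Proof. by rewrite /egf_term /= total1 !Rmult_0_l Rdiv_0_l. Qed.

Lemma infinite_sum_egf_total P x y a b c d a' b' c' d' l :
  Rabs x < 1 -> Rabs (x * y) < 1 ->
  (forall m, egf_term (total (count_pos P)) x y m.+2
             = lincomb_coef a b c d x m + lincomb_coef a' b' c' d' (x * y) m) ->
  lincomb_sum a b c d x + lincomb_sum a' b' c' d' (x * y) = l ->
  infinite_sum (egf_term (total (count_pos P)) x y) l.
Proof.
move=> x_lt1 xy_lt1 egf_SS <-; apply/is_series_Reals/is_series_decr_1.
apply: is_series_decr_1; rewrite egf_term_total1 /= /plus /opp /= Ropp_0 !Rplus_0_r.
apply: is_seriesR_ext (fun m => esym (egf_SS m)) _.
exact: is_seriesR_plus (is_series_lincomb x_lt1) (is_series_lincomb xy_lt1).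
Qed.

Lemma egf_term_levels_SS x y m : y <> 1 ->
  egf_term Ltot x y m.+2
  = lincomb_coef (y / (1 - y)) (- 2 * y / (1 - y)) (y / (1 - y)) 0 x m
    + lincomb_coef (- y / (1 - y)) ((1 + y) / (1 - y)) (- 1 / (1 - y)) 0 (x * y) m.
Proof.
move=> y_neq1; have y_neq1' : 1 - y <> 0 by lra.
rewrite /Ltot /nlevels egf_term_total_SS grand_total_levels prev_count_level_gf !sum_pow_S //.
rewrite (fact_INR_S m.+1) (fact_INR_S m) /lincomb_coef /log_sqr_coef /log_coef.
rewrite !Rpow_mult_distr -!tech_pow_Rmult !S_INR.
have m_ge0 := pos_INR m; have fact_neq0 := @fact_INR_neq0 m.
by field; repeat split; lra.
Qed.

Lemma egf_term_descents_SS x y m : y <> 1 ->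
  egf_term Dtot x y m.+2
  = lincomb_coef (- y / (1 - y)) (y * (2 - y) / (1 - y) ^ 2) (- y / (1 - y) ^ 2)
      (y / (2 * (1 - y))) x m
    + lincomb_coef (y / (1 - y)) (- 1 / (1 - y) ^ 2) (1 / (1 - y) ^ 2)
      (- y / (2 * (1 - y))) (x * y) m.
Proof.
move=> y_neq1; have y_neq1' : 1 - y <> 0 by lra.
rewrite /Dtot /ndescents egf_term_total_SS grand_total_descents prev_count_descent_gf.
rewrite sum_rev_weight_pow_S // !sum_pow_S //.
rewrite (fact_INR_S m.+1) (fact_INR_S m) /lincomb_coef /log_sqr_coef /log_coef.
rewrite !Rpow_mult_distr -!tech_pow_Rmult !S_INR.
have m_ge0 := pos_INR m; have fact_neq0 := @fact_INR_neq0 m.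
by field; repeat split; lra.
Qed.

Lemma egf_term_ascents_SS x y m : y <> 1 ->
  egf_term Utot x y m.+2
  = lincomb_coef 0 (- y / (1 - y) ^ 2) (y ^ 2 / (1 - y) ^ 2) (y / (2 * (1 - y))) x m
    + lincomb_coef 0 (y / (1 - y) ^ 2) (- y / (1 - y) ^ 2) (- y / (2 * (1 - y))) (x * y) m.
Proof.
move=> y_neq1; have y_neq1' : 1 - y <> 0 by lra.
rewrite /Utot /nascents egf_term_total_SS grand_total_ascents prev_count_ascent_gf.
rewrite sum_weight_pow_S // !sum_pow_S //.
rewrite (fact_INR_S m.+1) (fact_INR_S m) /lincomb_coef /log_sqr_coef /log_coef.
rewrite !Rpow_mult_distr -!tech_pow_Rmult !S_INR.
have m_ge0 := pos_INR m; have fact_neq0 := @fact_INR_neq0 m.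
by field; repeat split; lra.
Qed.

Theorem theorem3p4 (x y : R) (hx : Rabs x < 1) (hy : Rabs y < 1) :
  infinite_sum (egf_term Ltot x y)
    (x * y + (2 * (x * y - y - 1) * ln (1 - x * y) - 2 * y * (x - 2) * ln (1 - x)
              - y * (ln (1 - x * y) ^ 2 - ln (1 - x) ^ 2)) / (2 * (1 - y)))
  /\
  infinite_sum (egf_term Dtot x y)
    (x * y / (2 * (1 - y)) * ((3 * x - 2) / (1 - x) - x * y ^ 2 / (1 - x * y))
     + ((1 - x * y) * ln (1 - x * y) - y * (2 - x - y) * ln (1 - x)) / (1 - y) ^ 2
     + y * (ln (1 - x * y) ^ 2 - ln (1 - x) ^ 2) / (2 * (1 - y)))
  /\
  infinite_sum (egf_term Utot x y)
    (x * y / (2 * (1 - y)) * ((2 - x) / (1 - x) - x * y ^ 2 / (1 - x * y))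
     + y * (1 - x * y) / (1 - y) ^ 2 * ln ((1 - x) / (1 - x * y))).
Proof.
have hxy : Rabs (x * y) < 1.
  by rewrite Rabs_mult; have := Rabs_pos x; have := Rabs_pos y; nra.
have [x_lt1 _] := Rabs_def2 _ _ hx; have [y_lt1 _] := Rabs_def2 _ _ hy.
have [xy_lt1 _] := Rabs_def2 _ _ hxy.
have y_neq1 : y <> 1 by lra.
split; [|split].
- apply: (infinite_sum_egf_total hx hxy (fun m => egf_term_levels_SS x m y_neq1)).
  by rewrite /lincomb_sum; field; lra.
- apply: (infinite_sum_egf_total hx hxy (fun m => egf_term_descents_SS x m y_neq1)).
  by rewrite /lincomb_sum; field; lra.
- apply: (infinite_sum_egf_total hx hxy (fun m => egf_term_ascents_SS x m y_neq1)).
  by rewrite /lincomb_sum ln_div; [field; lra | lra | lra].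
Qed.
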